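(* If $X$ is a proper Gromov hyperbolic geodesic metric space, then the quotient $[\partial_hX]_s$ of the horofunction boundary by the sublinear difference relation is homeomorphic to the Gromov boundary $\partial X$.
   Context: With basepoint $o$, $b_y(x)=d(x,y)-d(o,y)$; the horofunction boundary $\partial_hX$ consists of pointwise limits $b_\xi$ of $b_{y_n}$ along unbounded sequences (compact-open topology). Two points $\xi,\eta\in\partial_hX$ are sublinearly equivalent if $\lim_{n\to\infty}\sup_{d(o,x)\ge n}|b_\xi(x)-b_\eta(x)|/d(o,x)=0$; $[\partial_hX]_s$ is the quotient space. *)

From Stdlib Require Import Reals List.
Open Scope R_scope.

Definition is_metric {X : Type} (d : X -> X -> R) : Prop :=
  (forall x y, 0 <= d x y) /\ (forall x y, d x y = 0 <-> x = y) /\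
  (forall x y, d x y = d y x) /\ (forall x y z, d x z <= d x y + d y z).

Definition geodesic_space {X : Type} (d : X -> X -> R) : Prop :=
  forall x y : X, exists g : R -> X, g 0 = x /\ g (d x y) = y /\
    forall s t, 0 <= s <= d x y -> 0 <= t <= d x y -> d (g s) (g t) = Rabs (s - t).

Definition metric_open {X : Type} (d : X -> X -> R) (U : X -> Prop) : Prop :=
  forall x, U x -> exists e, 0 < e /\ forall y, d x y < e -> U y.

Definition compact_in {X : Type} (d : X -> X -> R) (K : X -> Prop) : Prop :=
  forall (I : Type) (U : I -> X -> Prop),
    (forall i, metric_open d (U i)) -> (forall x, K x -> exists i, U i x) ->
    exists l : list I, forall x, K x -> exists i, In i l /\ U i x.

Definition proper_space {X : Type} (d : X -> X -> R) : Prop :=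
  forall x r, compact_in d (fun y => d x y <= r).

Definition gromov_product {X : Type} (d : X -> X -> R) (w x y : X) : R :=
  (d x w + d y w - d x y) / 2.

Definition gromov_hyperbolic {X : Type} (d : X -> X -> R) : Prop :=
  exists delta, 0 <= delta /\ forall w x y z,
    Rmin (gromov_product d w x z) (gromov_product d w y z) - delta
      <= gromov_product d w x y.

Definition busemann {X : Type} (d : X -> X -> R) (o y : X) : X -> R :=
  fun x => d x y - d o y.

Definition is_horofunction {X : Type} (d : X -> X -> R) (o : X) (b : X -> R) : Prop :=
  exists y : nat -> X, (forall M, exists n, M < d o (y n)) /\
    forall x, Un_cv (fun n => busemann d o (y n) x) (b x).

Definition horo_boundary {X : Type} (d : X -> X -> R) (o : X) : Type :=
  { b : X -> R | is_horofunction d o b }.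

Definition R_open (U : R -> Prop) : Prop :=
  forall r, U r -> exists e, 0 < e /\ forall s, Rabs (s - r) < e -> U s.

(* subbasic sets V(K,U) = {f | f(K) subset U} of the compact-open topology *)
Definition co_subbasic {X : Type} (d : X -> X -> R) (S : (X -> R) -> Prop) : Prop :=
  exists (K : X -> Prop) (U : R -> Prop), compact_in d K /\ R_open U /\
    forall f, S f <-> (forall x, K x -> U (f x)).

(* topology generated by the subbasis: unions of finite intersections *)
Definition co_open {X : Type} (d : X -> X -> R) (W : (X -> R) -> Prop) : Prop :=
  forall f, W f -> exists l : list ((X -> R) -> Prop),
    (forall S, In S l -> co_subbasic d S) /\ (forall S, In S l -> S f) /\
    (forall g, (forall S, In S l -> S g) -> W g).

Definition horo_open {X : Type} (d : X -> X -> R) (o : X)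
  (U : horo_boundary d o -> Prop) : Prop :=
  exists W, co_open d W /\ forall b, U b <-> W (proj1_sig b).

(* sublinear equivalence: lim_n sup_{d(o,x)>=n} |f x - g x| / d(o,x) = 0 *)
Definition sublin_equiv {X : Type} (d : X -> X -> R) (o : X) (f g : X -> R) : Prop :=
  forall eps, 0 < eps -> exists N, forall x, N <= d o x ->
    Rabs (f x - g x) <= eps * d o x.

Definition sublin_quotient {X : Type} (d : X -> X -> R) (o : X) : Type :=
  { C : horo_boundary d o -> Prop |
    exists xi : horo_boundary d o,
      C = fun eta => sublin_equiv d o (proj1_sig xi) (proj1_sig eta) }.

Definition sq_proj {X : Type} (d : X -> X -> R) (o : X) (xi : horo_boundary d o)
  : sublin_quotient d o :=
  exist _ (fun eta => sublin_equiv d o (proj1_sig xi) (proj1_sig eta))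
        (ex_intro _ xi eq_refl).

Definition sq_open {X : Type} (d : X -> X -> R) (o : X)
  (U : sublin_quotient d o -> Prop) : Prop :=
  horo_open d o (fun xi => U (sq_proj d o xi)).

Definition conv_at_infty {X : Type} (d : X -> X -> R) (o : X) (x : nat -> X) : Prop :=
  forall M, exists N, forall i j, (N <= i)%nat -> (N <= j)%nat ->
    M <= gromov_product d o (x i) (x j).

Definition seq_equiv {X : Type} (d : X -> X -> R) (o : X) (x y : nat -> X) : Prop :=
  forall M, exists N, forall i j, (N <= i)%nat -> (N <= j)%nat ->
    M <= gromov_product d o (x i) (y j).

Definition gromov_boundary {X : Type} (d : X -> X -> R) (o : X) : Type :=
  { C : (nat -> X) -> Prop | exists x, conv_at_infty d o x /\
      C = fun y => conv_at_infty d o y /\ seq_equiv d o x y }.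

(* (xi|eta)_o > r, where (xi|eta)_o = sup over representatives of
   liminf_{i,j} (x_i|y_j)_o *)
Definition gprod_gt {X : Type} (d : X -> X -> R) (o : X)
  (xi eta : gromov_boundary d o) (r : R) : Prop :=
  exists x y, proj1_sig xi x /\ proj1_sig eta y /\
    exists r', r < r' /\ exists N, forall i j, (N <= i)%nat -> (N <= j)%nat ->
      r' <= gromov_product d o (x i) (y j).

(* topology: the sets {eta | (xi|eta)_o > r} form neighbourhood bases *)
Definition gb_open {X : Type} (d : X -> X -> R) (o : X)
  (U : gromov_boundary d o -> Prop) : Prop :=
  forall xi, U xi -> exists r, forall eta, gprod_gt d o xi eta r -> U eta.

Definition homeomorphic {A B : Type} (openA : (A -> Prop) -> Prop)
  (openB : (B -> Prop) -> Prop) : Prop :=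
  exists (f : A -> B) (g : B -> A),
    (forall a, g (f a) = a) /\ (forall b, f (g b) = b) /\
    (forall V, openB V -> openA (fun a => V (f a))) /\
    (forall U, openA U -> openB (fun b => U (g b))).

(* For a horofunction h put (x|h)_o := (d(x,o) - h(x))/2, the limit of (x|y_n)_o whenever
   b_{y_n} -> h; the four-point condition passes to these limits. As X is proper and geodesic,
   (.|h)_o exceeds t - 1 somewhere in the ball of radius t, so the sequences along which
   (.|h)_o -> oo exist and form a single point of the Gromov boundary; every boundary point
   arises this way, from a pointwise limit of Busemann functions along a representative.
   Two horofunctions give the same point iff they differ by at most 4 delta, iff they are
   sublinearly equivalent: a sublinear error cannot stop the linear growth of (x_n|h)_o along
   an escaping sequence. The induced bijection is continuous since closeness at one point
   where (.|h)_o is large controls Gromov products. Its inverse is continuous because the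
   1-Lipschitz functions vanishing at o are sequentially compact (Arzela-Ascoli), pointwise
   limits of horofunctions are horofunctions, and for such functions pointwise convergence
   implies convergence in the compact-open topology. *)

From Stdlib Require Import Reals Lra Lia List.
From Stdlib Require Import ClassicalEpsilon ProofIrrelevance.
From Stdlib Require Import FunctionalExtensionality PropExtensionality Classical.
Open Scope R_scope.

Ltac lra_Rabs := unfold Rdist, Rabs in *; repeat match goal with
  | |- context[Rcase_abs ?x] => destruct (Rcase_abs x)
  | H: context[Rcase_abs ?x] |- _ => destruct (Rcase_abs x) end; try lra.
Ltac lra_Rmin := unfold Rmin in *; repeat match goal with
  | |- context[Rle_dec ?x ?y] => destruct (Rle_dec x y)
  | H: context[Rle_dec ?x ?y] |- _ => destruct (Rle_dec x y) end; try lra.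

Lemma proj1_sig_inj {A : Type} {P : A -> Prop} (u v : sig P) : proj1_sig u = proj1_sig v -> u = v.
Proof. apply eq_sig_hprop. intros; apply proof_irrelevance. Qed.

Definition strictly_increasing (f : nat -> nat) : Prop := forall n, (f n < f (S n))%nat.

Lemma strictly_increasing_le f :
  strictly_increasing f -> forall n m, (n <= m)%nat -> (f n <= f m)%nat.
Proof. intros Hf n m Hnm; induction Hnm; [lia|]. specialize (Hf m); lia. Qed.

Lemma strictly_increasing_ge_id f : strictly_increasing f -> forall n, (n <= f n)%nat.
Proof. intros Hf n; induction n; [lia|]. specialize (Hf n); lia. Qed.

Lemma strictly_increasing_id : strictly_increasing (fun n => n).
Proof. intros n; lia. Qed.

Lemma strictly_increasing_comp f g :
  strictly_increasing f -> strictly_increasing g -> strictly_increasing (fun n => f (g n)).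
Proof.
  intros Hf Hg n. pose proof (Hg n).
  assert (f (S (g n)) <= f (g (S n)))%nat by (apply strictly_increasing_le; auto).
  specialize (Hf (g n)); lia.
Qed.

Lemma Un_cv_subseq u l f :
  Un_cv u l -> strictly_increasing f -> Un_cv (fun n => u (f n)) l.
Proof.
  intros Hu Hf e He. destruct (Hu e He) as [N HN]. exists N. intros n Hn.
  apply HN. pose proof (strictly_increasing_ge_id f Hf n); lia.
Qed.

Lemma Un_cv_const c : Un_cv (fun _ => c) c.
Proof. intros e He. exists 0%nat. intros. unfold Rdist. rewrite Rminus_diag, Rabs_R0. lra. Qed.

Lemma Un_cv_lower_bound u l c N :
  Un_cv u l -> (forall n, (N <= n)%nat -> c <= u n) -> c <= l.
Proof.
  intros Hu Hc. destruct (Rle_dec c l) as [|Hn]; auto. exfalso.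
  destruct (Hu (c - l)) as [M HM]; [lra|]. specialize (HM (max N M) ltac:(lia)).
  specialize (Hc (max N M) ltac:(lia)). lra_Rabs.
Qed.

Lemma Un_cv_half_diff u l a : Un_cv u l -> Un_cv (fun n => (a - u n) / 2) ((a - l) / 2).
Proof.
  intros Hu e He. destruct (Hu e He) as [N HN]. exists N. intros n Hn.
  specialize (HN n Hn). lra_Rabs.
Qed.

Lemma Un_cv_min_le u v w a b c delta : Un_cv u a -> Un_cv v b -> Un_cv w c ->
  (forall n, Rmin (u n) (v n) - delta <= w n) -> Rmin a b - delta <= c.
Proof.
  intros Hu Hv Hw H. destruct (Rle_dec (Rmin a b - delta) c) as [|Hn]; auto. exfalso.
  set (e := (Rmin a b - delta - c) / 2). assert (He : e > 0) by (unfold e; lra).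
  destruct (Hu e He) as [N1 H1]. destruct (Hv e He) as [N2 H2]. destruct (Hw e He) as [N3 H3].
  set (n := (N1 + N2 + N3)%nat).
  specialize (H1 n ltac:(unfold n; lia)). specialize (H2 n ltac:(unfold n; lia)).
  specialize (H3 n ltac:(unfold n; lia)). specialize (H n).
  unfold e in *. lra_Rabs; lra_Rmin.
Qed.

Lemma bounded_subseq_cv (u : nat -> R) (B : R) : (forall n, Rabs (u n) <= B) ->
  exists f, strictly_increasing f /\ exists l, Un_cv (fun n => u (f n)) l.
Proof.
  intros HB.
  destruct (Bolzano_Weierstrass u (fun c => -B <= c <= B) (compact_P3 (-B) B)) as [l Hl].
  { intros n; specialize (HB n); lra_Rabs. }
  assert (Hstep : forall n N : nat, exists p, (N <= p)%nat /\ Rabs (u p - l) < / INR (S n)).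
  { intros n N. assert (Hp : 0 < / INR (S n)) by (apply Rinv_0_lt_compat, lt_0_INR; lia).
    destruct (Hl (disc l (mkposreal _ Hp)) N) as [p [Hp1 Hp2]].
    - exists (mkposreal _ Hp). intros y Hy; exact Hy.
    - exists p. split; auto. }
  destruct (choice (fun nN p => (snd nN <= p)%nat /\ Rabs (u p - l) < / INR (S (fst nN))))
    as [next Hnext].
  { intros [n N]. apply Hstep. }
  set (f := fix f n := match n with O => next (O, O) | S m => next (S m, S (f m)) end).
  exists f. split.
  - intros n. simpl. destruct (Hnext (S n, S (f n))). simpl in *. lia.
  - exists l. intros e He. destruct (archimed_cor1 e He) as [N [HN1 HN2]].
    exists N. intros n Hn. unfold Rdist.
    assert (Rabs (u (f n) - l) < / INR (S n)) by (destruct n; apply Hnext).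
    assert (/ INR (S n) <= / INR N)
      by (apply Rinv_le_contravar; [apply lt_0_INR; lia | apply le_INR; lia]).
    lra.
Qed.

Lemma eventually_forall_in_list {A : Type} (P : A -> nat -> Prop) :
  (forall a N N', (N <= N')%nat -> P a N -> P a N') ->
  forall l, (forall a, In a l -> exists N, P a N) -> exists N, forall a, In a l -> P a N.
Proof.
  intros Hmon l. induction l as [|a l IH]; intros H.
  - exists 0%nat. intros a [].
  - destruct (H a (or_introl eq_refl)) as [N1 H1].
    destruct IH as [N2 H2]. { intros b Hb; apply H; right; auto. }
    exists (max N1 N2). intros b [<-|Hb].
    + eapply Hmon; [|exact H1]; lia.
    + eapply Hmon; [|apply H2; auto]; lia.
Qed.

Lemma unbounded_beyond (u : nat -> R) : (forall M, exists n, M < u n) ->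
  forall N B, exists n, (N <= n)%nat /\ B < u n.
Proof.
  intros H N B.
  assert (Hprefix : exists C, forall k, (k < N)%nat -> u k <= C).
  { clear H. induction N as [|N [C HC]].
    - exists 0. intros; lia.
    - exists (Rmax C (u N)). intros k Hk. destruct (Nat.eq_dec k N) as [->|].
      + apply Rmax_r.
      + eapply Rle_trans; [apply HC; lia | apply Rmax_l]. }
  destruct Hprefix as [C HC]. destruct (H (Rmax B C)) as [n Hn]. exists n.
  pose proof (Rmax_l B C). pose proof (Rmax_r B C). split; [|lra].
  destruct (Compare_dec.le_lt_dec N n) as [|Hl]; auto. specialize (HC n Hl). lra.
Qed.

Lemma INR_eventually_ge (r : R) : exists K, forall n, (K <= n)%nat -> r <= INR n.
Proof.
  destruct (INR_unbounded r) as [K HK]. exists K. intros n Hn. apply le_INR in Hn. lra.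
Qed.

(** * Gromov products and horofunctions *)

Section HorofunctionBoundary.
Variables (X : Type) (d : X -> X -> R) (o : X).
Hypothesis d_metric : is_metric d.

Lemma dist_sym x y : d x y = d y x. Proof. apply d_metric. Qed.
Lemma dist_triangle x y z : d x z <= d x y + d y z. Proof. apply d_metric. Qed.
Lemma dist_refl x : d x x = 0. Proof. apply d_metric. reflexivity. Qed.

Notation gp := (gromov_product d o).

Lemma gp_sym x y : gp x y = gp y x.
Proof. unfold gromov_product. rewrite (dist_sym x y). lra. Qed.

Lemma gp_diag x : gp x x = d x o.
Proof. unfold gromov_product. rewrite dist_refl. lra. Qed.

Lemma gp_lipschitz x x' z : Rabs (gp x z - gp x' z) <= d x x'.
Proof.
  unfold gromov_product. pose proof (dist_triangle x x' o). pose proof (dist_triangle x' x o).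
  pose proof (dist_triangle x x' z). pose proof (dist_triangle x' x z).
  rewrite (dist_sym x' x) in *. lra_Rabs.
Qed.

Lemma busemann_eq_gp y x : busemann d o y x = d x o - 2 * gp x y.
Proof. unfold busemann, gromov_product. rewrite (dist_sym o y). lra. Qed.

Lemma busemann_lipschitz y x x' : Rabs (busemann d o y x - busemann d o y x') <= d x x'.
Proof.
  unfold busemann. pose proof (dist_triangle x x' y). pose proof (dist_triangle x' x y).
  rewrite (dist_sym x' x) in *. lra_Rabs.
Qed.

Lemma busemann_base y : busemann d o y o = 0.
Proof. unfold busemann. lra. Qed.

(* [gp_horo h x] plays the role of [(x|h)_o]: see [gp_horo_limit]. *)
Definition gp_horo (h : X -> R) (x : X) : R := (d x o - h x) / 2.

Definition busemann_limit (y : nat -> X) (h : X -> R) : Prop :=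
  forall x, Un_cv (fun n => busemann d o (y n) x) (h x).

Lemma gp_horo_limit y h x : busemann_limit y h -> Un_cv (fun n => gp x (y n)) (gp_horo h x).
Proof.
  intros H. apply (Un_cv_ext (fun n => (d x o - busemann d o (y n) x) / 2)).
  - intros n. rewrite busemann_eq_gp. lra.
  - apply Un_cv_half_diff, H.
Qed.

Lemma busemann_limit_lipschitz y h : busemann_limit y h ->
  forall x x', Rabs (h x - h x') <= d x x'.
Proof.
  intros H x x'.
  apply (@Rle_cv_lim (fun n => Rabs (busemann d o (y n) x - busemann d o (y n) x'))
                     (fun _ => d x x') _ _).
  - intros; apply busemann_lipschitz.
  - apply cv_cvabs, CV_minus; apply H.
  - apply Un_cv_const.
Qed.

Lemma horofunction_lipschitz h : is_horofunction d o h ->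
  forall x x', Rabs (h x - h x') <= d x x'.
Proof. intros [y [_ Hy]]. exact (busemann_limit_lipschitz y h Hy). Qed.

Lemma horofunction_base h : is_horofunction d o h -> h o = 0.
Proof.
  intros [y [_ Hy]]. apply (UL_sequence (fun n => busemann d o (y n) o)); [apply Hy|].
  apply (Un_cv_ext (fun _ => 0)); [intros; symmetry; apply busemann_base | apply Un_cv_const].
Qed.

Lemma gp_horo_lipschitz h : (forall x x', Rabs (h x - h x') <= d x x') ->
  forall x x', Rabs (gp_horo h x - gp_horo h x') <= d x x'.
Proof.
  intros Hh x x'. pose proof (Hh x x'). unfold gp_horo.
  pose proof (dist_triangle x x' o). pose proof (dist_triangle x' x o).
  rewrite (dist_sym x' x) in *. lra_Rabs.
Qed.

Lemma gp_horo_le_dist h x : is_horofunction d o h -> gp_horo h x <= d x o.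
Proof.
  intros Hh. pose proof (horofunction_lipschitz h Hh x o).
  rewrite (horofunction_base h Hh) in H. unfold gp_horo. lra_Rabs.
Qed.

Lemma singleton_compact p : compact_in d (fun x => x = p).
Proof.
  intros I U _ Hcov. destruct (Hcov p eq_refl) as [i Hi]. exists (i :: nil).
  intros x ->. exists i. split; [left; reflexivity | exact Hi].
Qed.

Lemma R_open_ball c e : R_open (fun s => Rabs (s - c) < e).
Proof. intros s Hs. exists (e - Rabs (s - c)). split; [lra|]. intros s' Hs'. lra_Rabs. Qed.

Lemma point_eval_subbasic p c e : co_subbasic d (fun g => Rabs (g p - c) < e).
Proof.
  exists (fun x => x = p), (fun s => Rabs (s - c) < e).
  split; [apply singleton_compact|]. split; [apply R_open_ball|].
  intros f. split; [intros H x ->; exact H | intros H; apply H; reflexivity].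
Qed.

Lemma metric_open_ball q e : metric_open d (fun x => d q x < e).
Proof.
  intros x Hx. exists (e - d q x). split; [lra|]. intros y Hy.
  pose proof (dist_triangle q x y). lra.
Qed.

Lemma gprod_gt_mono xi eta r r' :
  r <= r' -> gprod_gt d o xi eta r' -> gprod_gt d o xi eta r.
Proof.
  intros Hr [x [y [Hx [Hy [s [Hs HN]]]]]]. exists x, y.
  split; [exact Hx|]. split; [exact Hy|]. exists s. split; [lra | exact HN].
Qed.

(** * Consequences of properness *)

Hypothesis d_proper : proper_space d.
Hypothesis d_geodesic : geodesic_space d.

Lemma finite_net r e : 0 < e ->
  exists l : list X, forall x, d o x <= r -> exists q, In q l /\ d q x < e.
Proof.
  intros He. destruct (d_proper o r X (fun q x => d q x < e)) as [l Hl].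
  - intros q; apply metric_open_ball.
  - intros x _. exists x. rewrite dist_refl; exact He.
  - exists l. exact Hl.
Qed.

Lemma lipschitz_cv_uniform_on_ball (F : nat -> X -> R) (f : X -> R) :
  (forall n x x', Rabs (F n x - F n x') <= d x x') ->
  (forall x x', Rabs (f x - f x') <= d x x') ->
  (forall x, Un_cv (fun n => F n x) (f x)) ->
  forall r e, 0 < e ->
  exists N, forall n x, (N <= n)%nat -> d o x <= r -> Rabs (F n x - f x) < e.
Proof.
  intros HF Hf Hcv r e He.
  destruct (finite_net r (e / 3)) as [l Hl]; [lra|].
  destruct (eventually_forall_in_list
              (fun q N => forall n, (N <= n)%nat -> Rabs (F n q - f q) < e / 3)) with (l := l)
    as [N HN].
  { intros q N N' HNN' HP n Hn. apply HP; lia. }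
  { intros q _. destruct (Hcv q (e / 3)) as [N HN]; [lra|]. exists N. exact HN. }
  exists N. intros n x Hn Hx. destruct (Hl x Hx) as [q [Hq Hqx]].
  specialize (HN q Hq n Hn). pose proof (HF n x q). pose proof (Hf x q).
  rewrite (dist_sym x q) in *. lra_Rabs.
Qed.

Lemma geodesic_point_gp y t : 0 <= t <= d o y -> exists p, d o p = t /\ gp p y = t.
Proof.
  intros Ht. destruct (d_geodesic o y) as [g [Hg0 [Hg1 Hgi]]]. exists (g t).
  assert (Hop : d o (g t) = t).
  { rewrite <- Hg0 at 1. rewrite Hgi; try lra. rewrite Rabs_left1; lra. }
  assert (Hpy : d (g t) y = d o y - t).
  { rewrite <- Hg1 at 1. rewrite Hgi; try lra. rewrite Rabs_left1; lra. }
  split; [exact Hop|]. unfold gromov_product.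
  rewrite Hpy, (dist_sym (g t) o), Hop, (dist_sym y o). lra.
Qed.

(* On the sphere of radius [t] the point of a geodesic [o y_n] with [n] large does it. *)
Lemma gp_horo_large h : is_horofunction d o h ->
  forall t, 0 <= t -> exists p, d p o <= t /\ t - 1 <= gp_horo h p.
Proof.
  intros [y [Hunb Hy]] t Ht.
  destruct (lipschitz_cv_uniform_on_ball (fun n x => gp x (y n)) (gp_horo h))
    with (r := t) (e := 1) as [N HN].
  - intros n x x'. apply gp_lipschitz.
  - apply gp_horo_lipschitz. exact (busemann_limit_lipschitz y h Hy).
  - intros x. exact (gp_horo_limit y h x Hy).
  - lra.
  - destruct (unbounded_beyond _ Hunb N t) as [n [Hn Hyn]].
    destruct (geodesic_point_gp (y n) t) as [p [Hp Hgp]]; [lra|].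
    exists p. rewrite dist_sym. split; [lra|].
    specialize (HN n p Hn ltac:(lra)). simpl in HN. lra_Rabs.
Qed.

Lemma horofunction_escaping_seq h : is_horofunction d o h ->
  exists x : nat -> X, (forall n, d (x n) o <= INR n /\ INR n - 1 <= gp_horo h (x n)) /\
                       cv_infty (fun n => gp_horo h (x n)).
Proof.
  intros Hh.
  destruct (choice (fun n p => d p o <= INR n /\ INR n - 1 <= gp_horo h p)) as [x Hx].
  { intros n. apply gp_horo_large; [exact Hh | apply pos_INR]. }
  exists x. split; [exact Hx|].
  intros M. destruct (INR_eventually_ge (M + 2)) as [K HK]. exists K. intros n Hn.
  specialize (HK n Hn). specialize (Hx n). lra.
Qed.

Section DiagonalExtraction.
Variable F : nat -> X -> R.
Hypothesis F_lipschitz : forall n x x', Rabs (F n x - F n x') <= d x x'.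
Hypothesis F_base : forall n, F n o = 0.

Lemma list_subseq_cv (l : list X) (phi : nat -> nat) : exists rho, strictly_increasing rho /\
  forall q, In q l -> exists c, Un_cv (fun n => F (phi (rho n)) q) c.
Proof.
  induction l as [|q l [rho1 [Hrho1 IH]]].
  - exists (fun n => n). split; [apply strictly_increasing_id | intros q []].
  - destruct (bounded_subseq_cv (fun n => F (phi (rho1 n)) q) (d q o))
      as [rho2 [Hrho2 [c Hc]]].
    { intros n. pose proof (F_lipschitz (phi (rho1 n)) q o) as H.
      rewrite F_base, Rminus_0_r in H. exact H. }
    exists (fun n => rho1 (rho2 n)). split; [apply strictly_increasing_comp; assumption|].
    intros q' [<-|Hq'].
    + exists c. exact Hc.
    + destruct (IH q' Hq') as [c' Hc']. exists c'.
      exact (Un_cv_subseq (fun n => F (phi (rho1 n)) q') c' rho2 Hc' Hrho2).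
Qed.

Lemma level_net_exists (k : nat) :
  exists l : list X, forall x, d o x <= INR k -> exists q, In q l /\ d q x < / INR (S k).
Proof. apply finite_net. apply Rinv_0_lt_compat, lt_0_INR; lia. Qed.

Definition level_net (k : nat) : list X :=
  proj1_sig (constructive_indefinite_description _ (level_net_exists k)).

Lemma level_net_spec k x : d o x <= INR k ->
  exists q, In q (level_net k) /\ d q x < / INR (S k).
Proof. unfold level_net. destruct (constructive_indefinite_description _ _); auto. Qed.

Definition refine_subseq (j : nat) (phi : nat -> nat) : nat -> nat :=
  proj1_sig (constructive_indefinite_description _ (list_subseq_cv (level_net j) phi)).

Lemma refine_subseq_spec j phi : strictly_increasing (refine_subseq j phi) /\
  forall q, In q (level_net j) ->
  exists c, Un_cv (fun n => F (phi (refine_subseq j phi n)) q) c.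
Proof. unfold refine_subseq. destruct (constructive_indefinite_description _ _); auto. Qed.

Fixpoint level_subseq (j : nat) : nat -> nat :=
  match j with
  | O => fun n => n
  | S j => fun n => level_subseq j (refine_subseq j (level_subseq j) n)
  end.

Lemma level_subseq_strict j : strictly_increasing (level_subseq j).
Proof.
  induction j; simpl; [apply strictly_increasing_id|].
  apply strictly_increasing_comp; [exact IHj | apply refine_subseq_spec].
Qed.

Lemma level_subseq_tail j k : exists rho, strictly_increasing rho /\
  forall m, level_subseq (k + j) m = level_subseq j (rho m).
Proof.
  induction k as [|k [rho [Hrho E]]].
  - exists (fun n => n). split; [apply strictly_increasing_id | reflexivity].
  - exists (fun m => rho (refine_subseq (k + j) (level_subseq (k + j)) m)). split.
    + apply strictly_increasing_comp; [exact Hrho | apply refine_subseq_spec].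
    + intros m. apply E.
Qed.

Definition diagonal_subseq (n : nat) : nat := level_subseq n n.

Lemma diagonal_subseq_strict : strictly_increasing diagonal_subseq.
Proof.
  intros n. unfold diagonal_subseq. simpl.
  destruct (refine_subseq_spec n (level_subseq n)) as [Hr _].
  pose proof (strictly_increasing_ge_id _ Hr (S n)).
  pose proof (level_subseq_strict n n).
  pose proof (strictly_increasing_le _ (level_subseq_strict n) _ _ H). lia.
Qed.

Lemma diagonal_cv_on_net j q : In q (level_net j) ->
  exists c, Un_cv (fun n => F (diagonal_subseq n) q) c.
Proof.
  intros Hq. destruct (refine_subseq_spec j (level_subseq j)) as [_ Hs].
  destruct (Hs q Hq) as [c Hc]. exists c. intros e He.
  destruct (Hc e He) as [N HN]. exists (max N (S j)). intros n Hn.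
  destruct (level_subseq_tail (S j) (n - S j)) as [rho [Hrho E]].
  unfold diagonal_subseq. replace n with (n - S j + S j)%nat at 1 by lia. rewrite E.
  apply HN. pose proof (strictly_increasing_ge_id _ Hrho n). lia.
Qed.

Lemma diagonal_cv x : exists c, Un_cv (fun n => F (diagonal_subseq n) x) c.
Proof.
  assert (Hcauchy : Cauchy_crit (fun n => F (diagonal_subseq n) x)).
  { intros e He. destruct (INR_eventually_ge (d o x)) as [K1 HK1].
    destruct (archimed_cor1 (e / 3)) as [K2 [HK2 HK2']]; [lra|].
    set (k := max K1 K2).
    destruct (level_net_spec k x (HK1 k ltac:(unfold k; lia))) as [q [Hq Hqx]].
    assert (/ INR (S k) <= / INR K2)
      by (apply Rinv_le_contravar; [apply lt_0_INR; lia | apply le_INR; unfold k; lia]).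
    destruct (diagonal_cv_on_net k q Hq) as [c Hc].
    destruct (Hc (e / 6)) as [N HN]; [lra|]. exists N. intros n m Hn Hm.
    pose proof (HN n Hn). pose proof (HN m Hm).
    pose proof (F_lipschitz (diagonal_subseq n) x q).
    pose proof (F_lipschitz (diagonal_subseq m) x q).
    rewrite (dist_sym x q) in *. lra_Rabs. }
  destruct (R_complete _ Hcauchy) as [c Hc]. exists c; exact Hc.
Qed.

Lemma lipschitz_subseq_cv :
  exists th, strictly_increasing th /\ forall x, exists c, Un_cv (fun k => F (th k) x) c.
Proof.
  exists diagonal_subseq. split; [exact diagonal_subseq_strict | exact diagonal_cv].
Qed.

End DiagonalExtraction.

Lemma horofunction_pointwise_limit (H : nat -> X -> R) (h : X -> R) :
  (forall k, is_horofunction d o (H k)) ->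
  (forall x, Un_cv (fun k => H k x) (h x)) -> is_horofunction d o h.
Proof.
  intros HH Hcv.
  assert (Hz : forall k : nat, exists z, INR k < d o z /\
    forall x, d o x <= INR k -> Rabs (busemann d o z x - H k x) < / INR (S k)).
  { intros k. destruct (HH k) as [y [Hunb Hy]].
    destruct (lipschitz_cv_uniform_on_ball (fun n => busemann d o (y n)) (H k))
      with (r := INR k) (e := / INR (S k)) as [N HN].
    - intros; apply busemann_lipschitz.
    - apply horofunction_lipschitz, HH.
    - exact Hy.
    - apply Rinv_0_lt_compat, lt_0_INR; lia.
    - destruct (unbounded_beyond _ Hunb N (INR k)) as [n [Hn Hyn]].
      exists (y n). split; [exact Hyn|]. intros x Hx. exact (HN n x Hn Hx). }
  destruct (choice _ Hz) as [z Hzs]. exists z. split.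
  - intros M. destruct (INR_eventually_ge M) as [K HK]. exists K.
    specialize (HK K (le_n _)). destruct (Hzs K). lra.
  - intros x e He. destruct (INR_eventually_ge (d o x)) as [K1 HK1].
    destruct (archimed_cor1 (e / 2)) as [K2 [HK2 HK2']]; [lra|].
    destruct (Hcv x (e / 2)) as [K3 HK3]; [lra|].
    exists (max K1 (max K2 K3)). intros k Hk.
    destruct (Hzs k) as [_ Hb]. specialize (Hb x (HK1 k ltac:(lia))).
    specialize (HK3 k ltac:(lia)).
    assert (/ INR (S k) <= / INR K2)
      by (apply Rinv_le_contravar; [apply lt_0_INR; lia | apply le_INR; lia]).
    lra_Rabs.
Qed.

(* Cover [K] by balls on which [h] stays well inside [U]; 1-Lipschitz control at the
   finitely many centres then suffices. *)
Lemma co_subbasic_eventually (H : nat -> X -> R) (h : X -> R) (S : (X -> R) -> Prop) :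
  (forall k x x', Rabs (H k x - H k x') <= d x x') ->
  (forall x, Un_cv (fun k => H k x) (h x)) -> co_subbasic d S -> S h ->
  exists N, forall k, (N <= k)%nat -> S (H k).
Proof.
  intros HL Hcv [K [U [HK [HU HS]]]] Sh. pose proof (proj1 (HS h) Sh) as HhU.
  set (V := fun (i : X * R) y => K (fst i) /\ 0 < snd i /\
         (forall s, Rabs (s - h (fst i)) < snd i -> U s) /\ d (fst i) y < snd i / 3).
  destruct (HK (X * R)%type V) as [li Hli].
  - intros i y [Ki [Hpos [HUi Hy]]].
    destruct (metric_open_ball (fst i) (snd i / 3) y Hy) as [e [He1 He2]].
    exists e. split; [exact He1|]. intros z Hz. unfold V. auto.
  - intros y Ky. destruct (HU (h y) (HhU y Ky)) as [e [He1 He2]]. exists (y, e).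
    unfold V; simpl. rewrite dist_refl. repeat split; auto. lra.
  - destruct (eventually_forall_in_list (fun (i : X * R) N => 0 < snd i ->
        forall k, (N <= k)%nat -> Rabs (H k (fst i) - h (fst i)) < snd i / 3))
      with (l := li) as [N HN].
    { intros i N N' HNN' HP Hpos k Hk. apply HP; auto; lia. }
    { intros i _. destruct (Rlt_dec 0 (snd i)) as [Hpos|Hneg].
      - destruct (Hcv (fst i) (snd i / 3)) as [N HN]; [lra|]. exists N. intros _. exact HN.
      - exists 0%nat. intros; contradiction. }
    exists N. intros k Hk. apply HS. intros y Ky.
    destruct (Hli y Ky) as [[x e] [Hin [Kx [Hpos [HUx Hxy]]]]]. simpl in *.
    apply HUx. specialize (HN _ Hin Hpos k Hk). simpl in HN. pose proof (HL k y x).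
    rewrite (dist_sym y x) in *. lra_Rabs.
Qed.

Lemma co_basic_eventually (H : nat -> X -> R) (h : X -> R) (l : list ((X -> R) -> Prop)) :
  (forall k x x', Rabs (H k x - H k x') <= d x x') ->
  (forall x, Un_cv (fun k => H k x) (h x)) ->
  (forall S, In S l -> co_subbasic d S) -> (forall S, In S l -> S h) ->
  exists N, forall k, (N <= k)%nat -> forall S, In S l -> S (H k).
Proof.
  intros HL Hcv Hsub Hh.
  destruct (eventually_forall_in_list (fun S N => forall k, (N <= k)%nat -> S (H k)))
    with (l := l) as [N HN].
  - intros S N N' HNN' HP k Hk. apply HP; lia.
  - intros S HS. exact (co_subbasic_eventually H h S HL Hcv (Hsub S HS) (Hh S HS)).
  - exists N. intros k Hk S HS. exact (HN S HS k Hk).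
Qed.

(** * From horofunctions to the Gromov boundary *)

Variable delta : R.
Hypothesis delta_nonneg : 0 <= delta.
Hypothesis hyperbolic : forall x y z, Rmin (gp x z) (gp y z) - delta <= gp x y.

Lemma gp_ge_min_gp_horo h x z : is_horofunction d o h ->
  Rmin (gp_horo h x) (gp_horo h z) - delta <= gp x z.
Proof.
  intros [y [_ Hy]].
  apply (Un_cv_min_le (fun n => gp x (y n)) (fun n => gp z (y n)) (fun _ => gp x z));
    auto using gp_horo_limit, Un_cv_const.
Qed.

Lemma gp_horo_ge_min_gp h x z : is_horofunction d o h ->
  Rmin (gp z x) (gp_horo h x) - delta <= gp_horo h z.
Proof.
  intros [y [_ Hy]].
  apply (Un_cv_min_le (fun _ => gp z x) (fun n => gp x (y n)) (fun n => gp z (y n)));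
    auto using gp_horo_limit, Un_cv_const.
  intros n. rewrite (gp_sym x). apply hyperbolic.
Qed.

Definition horo_class (h : X -> R) : (nat -> X) -> Prop :=
  fun z => conv_at_infty d o z /\ cv_infty (fun j => gp_horo h (z j)).

Definition gromov_class (x : nat -> X) : (nat -> X) -> Prop :=
  fun y => conv_at_infty d o y /\ seq_equiv d o x y.

Lemma conv_at_infty_of_gp_horo h x : is_horofunction d o h ->
  cv_infty (fun j => gp_horo h (x j)) -> conv_at_infty d o x.
Proof.
  intros Hh Hx M. destruct (Hx (M + delta)) as [N HN]. exists N. intros i j Hi Hj.
  pose proof (gp_ge_min_gp_horo h (x i) (x j) Hh). pose proof (HN i Hi). pose proof (HN j Hj).
  lra_Rmin.
Qed.

Lemma horo_class_eq h x : is_horofunction d o h ->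
  cv_infty (fun j => gp_horo h (x j)) -> horo_class h = gromov_class x.
Proof.
  intros Hh Hx. apply functional_extensionality. intros z.
  apply propositional_extensionality. unfold horo_class, gromov_class.
  split; intros [Hz H]; split; auto.
  - intros M. destruct (Hx (M + delta)) as [N1 H1]. destruct (H (M + delta)) as [N2 H2].
    exists (max N1 N2). intros i j Hi Hj.
    pose proof (gp_ge_min_gp_horo h (x i) (z j) Hh).
    specialize (H1 i ltac:(lia)). specialize (H2 j ltac:(lia)). lra_Rmin.
  - intros M. destruct (Hx (M + delta + 1)) as [N1 H1].
    destruct (H (M + delta + 1)) as [N2 H2].
    exists N2. intros j Hj. set (i := max N1 N2).
    pose proof (gp_horo_ge_min_gp h (x i) (z j) Hh).
    specialize (H1 i ltac:(unfold i; lia)). specialize (H2 i j ltac:(unfold i; lia) Hj).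
    rewrite gp_sym in H2. lra_Rmin.
Qed.

Lemma horo_class_is_point (b : horo_boundary d o) : exists x, conv_at_infty d o x /\
  horo_class (proj1_sig b) = fun y => conv_at_infty d o y /\ seq_equiv d o x y.
Proof.
  destruct b as [h Hh]. simpl. destruct (horofunction_escaping_seq h Hh) as [x [_ Hx]].
  exists x. split; [exact (conv_at_infty_of_gp_horo h x Hh Hx) | exact (horo_class_eq h x Hh Hx)].
Qed.

Definition horo_point (b : horo_boundary d o) : gromov_boundary d o :=
  exist _ (horo_class (proj1_sig b)) (horo_class_is_point b).

Lemma gp_horo_ge_of_common_seq h h' x y :
  is_horofunction d o h -> is_horofunction d o h' ->
  cv_infty (fun j => gp_horo h (x j)) -> cv_infty (fun j => gp_horo h' (x j)) ->
  gp_horo h' y - 2 * delta <= gp_horo h y.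
Proof.
  intros Hh Hh' Hx Hx'.
  destruct (Hx (gp_horo h' y)) as [N1 H1]. destruct (Hx' (gp_horo h' y)) as [N2 H2].
  set (i := max N1 N2).
  specialize (H1 i ltac:(unfold i; lia)). specialize (H2 i ltac:(unfold i; lia)).
  pose proof (gp_horo_ge_min_gp h (x i) y Hh).
  pose proof (gp_ge_min_gp_horo h' y (x i) Hh'). lra_Rmin.
Qed.

(* The two horofunctions even differ by at most [4 delta]. *)
Lemma sublin_equiv_of_common_seq h h' x :
  is_horofunction d o h -> is_horofunction d o h' ->
  cv_infty (fun j => gp_horo h (x j)) -> cv_infty (fun j => gp_horo h' (x j)) ->
  sublin_equiv d o h h'.
Proof.
  intros Hh Hh' Hx Hx' eps He. exists (4 * delta / eps). intros y Hy.
  pose proof (gp_horo_ge_of_common_seq h h' x y Hh Hh' Hx Hx').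
  pose proof (gp_horo_ge_of_common_seq h' h x y Hh' Hh Hx' Hx).
  assert (4 * delta <= eps * d o y).
  { replace (4 * delta) with (eps * (4 * delta / eps)) by (field; lra).
    apply Rmult_le_compat_l; lra. }
  unfold gp_horo in *. lra_Rabs.
Qed.

Lemma cv_infty_of_sublin_equiv h h' x : is_horofunction d o h -> sublin_equiv d o h h' ->
  (forall n, d (x n) o <= INR n /\ INR n - 1 <= gp_horo h (x n)) ->
  cv_infty (fun j => gp_horo h' (x j)).
Proof.
  intros Hh Hs Hx M. destruct (Hs 1 ltac:(lra)) as [N HN].
  destruct (INR_eventually_ge (Rmax (N + 1) (2 * M + 3))) as [K HK]. exists K. intros n Hn.
  specialize (HK n Hn). specialize (Hx n).
  pose proof (Rmax_l (N + 1) (2 * M + 3)). pose proof (Rmax_r (N + 1) (2 * M + 3)).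
  pose proof (gp_horo_le_dist h (x n) Hh).
  specialize (HN (x n)). rewrite (dist_sym o) in HN. specialize (HN ltac:(lra)).
  unfold gp_horo in *. lra_Rabs.
Qed.

Lemma horo_point_eq_iff (b b' : horo_boundary d o) :
  horo_point b = horo_point b' <-> sublin_equiv d o (proj1_sig b) (proj1_sig b').
Proof.
  destruct b as [h Hh], b' as [h' Hh']. simpl.
  destruct (horofunction_escaping_seq h Hh) as [x [Hx Hxinf]]. split.
  - intros E. apply (f_equal (@proj1_sig _ _)) in E. simpl in E.
    assert (Hin : horo_class h x)
      by (split; [exact (conv_at_infty_of_gp_horo h x Hh Hxinf) | exact Hxinf]).
    rewrite E in Hin. destruct Hin as [_ Hx'inf].
    exact (sublin_equiv_of_common_seq h h' x Hh Hh' Hxinf Hx'inf).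
  - intros Hs. apply proj1_sig_inj. simpl.
    pose proof (cv_infty_of_sublin_equiv h h' x Hh Hs Hx) as Hx'inf.
    rewrite (horo_class_eq h x Hh Hxinf), (horo_class_eq h' x Hh' Hx'inf). reflexivity.
Qed.

Lemma sublin_equiv_refl (f : X -> R) : sublin_equiv d o f f.
Proof.
  intros eps He. exists 0. intros x Hx. rewrite Rminus_diag, Rabs_R0.
  apply Rmult_le_pos; lra.
Qed.

Lemma sq_proj_eq_of_horo_point_eq a b :
  horo_point a = horo_point b -> sq_proj d o a = sq_proj d o b.
Proof.
  intros E. apply proj1_sig_inj. simpl. apply functional_extensionality. intros eta.
  apply propositional_extensionality. rewrite <- !horo_point_eq_iff, E. tauto.
Qed.

Lemma sq_proj_surj (C : sublin_quotient d o) : exists b, C = sq_proj d o b.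
Proof. destruct C as [P [b E]]. exists b. apply proj1_sig_inj. exact E. Qed.

Definition sq_repr (C : sublin_quotient d o) : horo_boundary d o :=
  proj1_sig (constructive_indefinite_description _ (proj2_sig C)).

Definition quot_point (C : sublin_quotient d o) : gromov_boundary d o := horo_point (sq_repr C).

Lemma quot_point_proj b : quot_point (sq_proj d o b) = horo_point b.
Proof.
  unfold quot_point, sq_repr. destruct (constructive_indefinite_description _ _) as [b' E].
  simpl. apply horo_point_eq_iff.
  pose proof (f_equal (fun P => P b) E) as Eb. simpl in Eb. rewrite <- Eb. apply sublin_equiv_refl.
Qed.

(* Take [p] with [(p|h)_o] large: closeness at [p] keeps [(p|h')_o] large. *)
Lemma gprod_gt_of_close_at_point (b : horo_boundary d o) r : exists p,
  forall b' : horo_boundary d o, Rabs (proj1_sig b' p - proj1_sig b p) < 1 ->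
  gprod_gt d o (horo_point b) (horo_point b') r.
Proof.
  destruct b as [h Hh]. set (t := Rabs r + 2 + 2 * delta).
  destruct (gp_horo_large h Hh t) as [p [_ Hp]]; [unfold t; pose proof (Rabs_pos r); lra|].
  exists p. intros [h' Hh'] Hclose. simpl in *.
  destruct (horofunction_escaping_seq h Hh) as [x [_ Hx]].
  destruct (horofunction_escaping_seq h' Hh') as [z [_ Hz]].
  exists x, z. split; [split; [exact (conv_at_infty_of_gp_horo h x Hh Hx) | exact Hx]|].
  split; [split; [exact (conv_at_infty_of_gp_horo h' z Hh' Hz) | exact Hz]|].
  exists (r + / 2). split; [lra|].
  destruct (Hx t) as [N1 HN1]. destruct (Hz t) as [N2 HN2]. exists (max N1 N2).
  intros i j Hi Hj. specialize (HN1 i ltac:(lia)). specialize (HN2 j ltac:(lia)).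
  pose proof (hyperbolic (x i) (z j) p).
  pose proof (gp_ge_min_gp_horo h (x i) p Hh).
  pose proof (gp_ge_min_gp_horo h' (z j) p Hh').
  assert (gp_horo h' p >= gp_horo h p - / 2) by (unfold gp_horo in *; lra_Rabs).
  pose proof (Rle_abs r). unfold t in *. lra_Rmin.
Qed.

Lemma quot_point_continuous V : gb_open d o V -> sq_open d o (fun C => V (quot_point C)).
Proof.
  intros HV.
  exists (fun g => exists l : list ((X -> R) -> Prop),
    (forall S, In S l -> co_subbasic d S) /\ (forall S, In S l -> S g) /\
    forall h (Hh : is_horofunction d o h), (forall S, In S l -> S h) ->
    V (horo_point (exist _ h Hh))).
  split.
  - intros g [l [Hsub [Hg Hl]]]. exists l. split; [exact Hsub|]. split; [exact Hg|].
    intros g' Hg'. exists l. auto.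
  - intros b. rewrite quot_point_proj. split.
    + intros Hb. destruct (HV _ Hb) as [r Hr].
      destruct (gprod_gt_of_close_at_point b r) as [p Hp].
      exists ((fun g => Rabs (g p - proj1_sig b p) < 1) :: nil). split; [|split].
      * intros S [<-|[]]. apply point_eval_subbasic.
      * intros S [<-|[]]. rewrite Rminus_diag, Rabs_R0. lra.
      * intros h Hh HS. apply Hr, (Hp (exist _ h Hh)). exact (HS _ (or_introl eq_refl)).
    + intros [l [_ [Hb Hl]]]. destruct b as [h Hh]. apply Hl, Hb.
Qed.

(** * The inverse map *)

Lemma horo_point_surj (eta : gromov_boundary d o) : exists b, horo_point b = eta.
Proof.
  destruct eta as [C [x [Hx E]]].
  destruct (lipschitz_subseq_cv (fun n => busemann d o (x n))) as [th [Hth Hcv]].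
  { intros; apply busemann_lipschitz. } { intros; apply busemann_base. }
  destruct (choice _ Hcv) as [h Hh].
  assert (Hhor : is_horofunction d o h).
  { exists (fun n => x (th n)). split; [|exact Hh].
    intros M. destruct (Hx (M + 1)) as [N HN]. exists N.
    specialize (HN (th N) (th N)). pose proof (strictly_increasing_ge_id _ Hth N).
    rewrite gp_diag, (dist_sym o) in *. specialize (HN ltac:(lia) ltac:(lia)). lra. }
  exists (exist _ h Hhor). apply proj1_sig_inj. simpl. rewrite E.
  apply (horo_class_eq h x Hhor).
  intros M. destruct (Hx (M + 1)) as [N HN]. exists N. intros i Hi.
  assert (M + 1 <= gp_horo h (x i)); [|lra].
  apply (Un_cv_lower_bound _ _ _ N (gp_horo_limit (fun n => x (th n)) h (x i) Hh)).
  intros n Hn. apply HN; [exact Hi|]. pose proof (strictly_increasing_ge_id _ Hth n); lia.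
Qed.

Definition gromov_to_horo (eta : gromov_boundary d o) : horo_boundary d o :=
  proj1_sig (constructive_indefinite_description _ (horo_point_surj eta)).

Lemma horo_point_gromov_to_horo eta : horo_point (gromov_to_horo eta) = eta.
Proof. unfold gromov_to_horo. destruct (constructive_indefinite_description _ _); auto. Qed.

Definition gromov_to_quot (eta : gromov_boundary d o) : sublin_quotient d o :=
  sq_proj d o (gromov_to_horo eta).

Lemma gp_horo_ge_of_gprod_gt (b b' : horo_boundary d o) r q :
  gprod_gt d o (horo_point b) (horo_point b') r ->
  Rmin (gp_horo (proj1_sig b) q - delta) r - 2 * delta <= gp_horo (proj1_sig b') q.
Proof.
  destruct b as [h Hh], b' as [h' Hh']. simpl.
  intros [x [w [[_ Hx] [[_ Hw] [r' [Hr' [N HN]]]]]]]. simpl in Hx, Hw.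
  set (s := Rmin (gp_horo h q - delta) r - delta).
  destruct (Hx (gp_horo h q)) as [N1 HN1]. destruct (Hw s) as [N2 HN2].
  set (i := max N N1). set (j := max N N2).
  specialize (HN1 i ltac:(unfold i; lia)). specialize (HN2 j ltac:(unfold j; lia)).
  specialize (HN i j ltac:(unfold i; lia) ltac:(unfold j; lia)).
  pose proof (gp_horo_ge_min_gp h' (w j) q Hh').
  pose proof (hyperbolic q (w j) (x i)) as Hqwx. rewrite (gp_sym (w j) (x i)) in Hqwx.
  pose proof (gp_ge_min_gp_horo h q (x i) Hh).
  unfold s in *. lra_Rmin.
Qed.

Lemma horo_point_pointwise_limit (b : horo_boundary d o) (bs : nat -> horo_boundary d o)
  h (Hh : is_horofunction d o h) :
  (forall k, gprod_gt d o (horo_point b) (horo_point (bs k)) (INR k)) ->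
  (forall x, Un_cv (fun k => proj1_sig (bs k) x) (h x)) ->
  horo_point (exist _ h Hh) = horo_point b.
Proof.
  intros Hgt Hcv.
  destruct (horofunction_escaping_seq _ (proj2_sig b)) as [p [Hp Hpinf]].
  assert (Hinf : cv_infty (fun m => gp_horo h (p m))).
  { intros M. destruct (INR_eventually_ge (M + 2 + 3 * delta)) as [K HK]. exists K.
    intros m Hm. specialize (HK m Hm).
    assert (INR m - 1 - 3 * delta <= gp_horo h (p m)); [|lra].
    apply (Un_cv_lower_bound (fun k => gp_horo (proj1_sig (bs k)) (p m)) _ _ m).
    - apply Un_cv_half_diff, Hcv.
    - intros k Hk. pose proof (gp_horo_ge_of_gprod_gt b (bs k) (INR k) (p m) (Hgt k)).
      destruct (Hp m) as [_ Hpm]. assert (INR m <= INR k) by (apply le_INR; lia). lra_Rmin. }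
  apply proj1_sig_inj. simpl. rewrite (horo_class_eq h p Hh Hinf).
  destruct b as [hb Hhb]. simpl in *. rewrite (horo_class_eq hb p Hhb Hpinf). reflexivity.
Qed.

(* Otherwise points [eta_n] with [(xi|eta_n) > n] avoid [U]; a pointwise limit of their
   horofunctions represents [xi], and approximates them in the compact-open topology. *)
Lemma gromov_to_quot_continuous U :
  sq_open d o U -> gb_open d o (fun eta => U (gromov_to_quot eta)).
Proof.
  intros HU xi HUxi. apply NNPP. intros Hno.
  assert (Hseq : forall n : nat, exists eta,
    gprod_gt d o xi eta (INR n) /\ ~ U (gromov_to_quot eta)).
  { intros n. apply NNPP. intros Hn. apply Hno. exists (INR n). intros eta Heta.
    apply NNPP. intros HnU. apply Hn. exists eta. auto. }
  destruct (choice _ Hseq) as [etas Hetas].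
  set (bs := fun n => gromov_to_horo (etas n)).
  destruct (lipschitz_subseq_cv (fun n => proj1_sig (bs n))) as [th [Hth Hcv]].
  { intros n; apply horofunction_lipschitz, proj2_sig. }
  { intros n; apply horofunction_base, proj2_sig. }
  destruct (choice _ Hcv) as [h Hh].
  assert (Hhor : is_horofunction d o h).
  { apply (horofunction_pointwise_limit (fun k => proj1_sig (bs (th k)))); [|exact Hh].
    intros; apply proj2_sig. }
  assert (Hpoint : horo_point (exist _ h Hhor) = horo_point (gromov_to_horo xi)).
  { apply (horo_point_pointwise_limit _ (fun k => bs (th k))); [|exact Hh].
    intros k. unfold bs. rewrite !horo_point_gromov_to_horo.
    apply (gprod_gt_mono _ _ _ (INR (th k))); [|apply Hetas].
    apply le_INR, strictly_increasing_ge_id, Hth. }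
  assert (HUh : U (sq_proj d o (exist _ h Hhor))).
  { rewrite (sq_proj_eq_of_horo_point_eq _ _ Hpoint). exact HUxi. }
  destruct HU as [W [HW HWb]]. apply HWb in HUh. simpl in HUh.
  destruct (HW h HUh) as [l [Hsub [Hlh Hl]]].
  destruct (co_basic_eventually (fun k => proj1_sig (bs (th k))) h l) as [N HN];
    [intros k; apply horofunction_lipschitz, proj2_sig | exact Hh | exact Hsub | exact Hlh |].
  destruct (Hetas (th N)) as [_ HnU]. apply HnU. unfold gromov_to_quot.
  apply HWb, Hl, (HN N (le_n N)).
Qed.

Theorem sublin_quotient_homeomorphic_gromov_boundary : homeomorphic (sq_open d o) (gb_open d o).
Proof.
  exists quot_point, gromov_to_quot. split; [|split; [|split]].
  - intros C. destruct (sq_proj_surj C) as [b ->]. unfold gromov_to_quot.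
    rewrite quot_point_proj. apply sq_proj_eq_of_horo_point_eq, horo_point_gromov_to_horo.
  - intros eta. unfold gromov_to_quot. rewrite quot_point_proj. apply horo_point_gromov_to_horo.
  - exact quot_point_continuous.
  - exact gromov_to_quot_continuous.
Qed.

End HorofunctionBoundary.

Theorem corollary2p7 (X : Type) (d : X -> X -> R) (o : X) :
  is_metric d -> proper_space d -> geodesic_space d -> gromov_hyperbolic d ->
  homeomorphic (sq_open d o) (gb_open d o).
Proof.
  intros Hmetric Hproper Hgeodesic [delta [Hdelta Hhyperbolic]].
  exact (sublin_quotient_homeomorphic_gromov_boundary X d o Hmetric Hproper Hgeodesic
           delta Hdelta (Hhyperbolic o)).
Qed.
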